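(* Suppose that either $r>\dfrac{\beta b}{m+\mu}$, or $\beta b(r-n)+rn(m+\mu)>0$. Then system (S) has an equilibrium of the form $E_5=\big(0,\,\tfrac{b}{m+\mu},\,M_5,\,N_5\big)$ with $M_5>0$ and $N_5>0$.
   Context: The model (S) is the system of ODEs for healthy bees $B$, infected bees $I$, healthy mites $M$ and infected mites $N$: $$B'=b\frac{B}{B+I}-\lambda BN-\gamma BI-mB,$$ $$I'=b\frac{I}{B+I}+\lambda BN+\gamma BI-(m+\mu)I,$$ $$M'=r\Big(1-\frac{M+N}{K}\Big)(M+N)-\beta MI-\delta MN-eMB,$$ $$N'=-nN-pN(N+M)+\beta MI+\delta MN-eNB,$$ where all parameters $b,\lambda,\gamma,m,\mu,r,K,\beta,\delta,e,n,p$ are positive constants. *)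

From Stdlib Require Import Reals.
Open Scope R_scope.

Definition fB (b lam gam m mu : R) (B I M N : R) : R :=
  b * (B / (B + I)) - lam * B * N - gam * B * I - m * B.

Definition fI (b lam gam m mu : R) (B I M N : R) : R :=
  b * (I / (B + I)) + lam * B * N + gam * B * I - (m + mu) * I.

Definition fM (r K beta delta e : R) (B I M N : R) : R :=
  r * (1 - (M + N) / K) * (M + N) - beta * M * I - delta * M * N - e * M * B.

Definition fN (n p beta delta e : R) (B I M N : R) : R :=
  - n * N - p * N * (N + M) + beta * M * I + delta * M * N - e * N * B.

Definition is_equilibrium (b lam gam m mu r K beta delta e n p : R)
  (B I M N : R) : Prop :=
  fB b lam gam m mu B I M N = 0 /\
  fI b lam gam m mu B I M N = 0 /\
  fM r K beta delta e B I M N = 0 /\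
  fN n p beta delta e B I M N = 0.

(* With no healthy bees, the bee equations force I = b/(m+mu), and the mite
   equations only see the infected bees through the constant force of
   infection i = beta I.  Writing S = M + N for the total mite population,
   subtracting the two mite equations gives N = S q(S) with
   q(S) = r (1 - S/K) / (n + p S), so an equilibrium with M, N > 0 is a root
   in (0, K) of one scalar residual.  The residual is positive at S = K and
   its sign at S = 0 is that of -(i (r - n) + r n), so the hypothesis gives a
   root by the intermediate value theorem. *)

From Stdlib Require Import Reals Lra Psatz Ranalysis5.
Open Scope R_scope.

Section MiteSubsystem.

Variables r K n p delta i : R.
Hypotheses (r_gt0 : 0 < r) (K_gt0 : 0 < K) (n_gt0 : 0 < n) (p_gt0 : 0 < p)
  (delta_gt0 : 0 < delta) (i_gt0 : 0 < i).
Hypothesis invasion : i * (r - n) + r * n > 0.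

(* Share N/S of infected mites at an equilibrium of total size S. *)
Definition infected_share (S : R) : R := r * (1 - S / K) / (n + p * S).

Definition mite_residual (S : R) : R :=
  (1 - infected_share S) * (i + delta * S * infected_share S) - r * (1 - S / K).

Lemma mite_residual_0_lt0 : mite_residual 0 < 0.
Proof.
  unfold mite_residual, infected_share.
  replace ((1 - r * (1 - 0 / K) / (n + p * 0)) * (i + delta * 0 * (r * (1 - 0 / K)
    / (n + p * 0))) - r * (1 - 0 / K)) with (- (i * (r - n) + r * n) / n)
    by (field; lra).
  assert (0 < (i * (r - n) + r * n) / n) by (apply Rdiv_lt_0_compat; lra).
  lra.
Qed.

Lemma mite_residual_K_gt0 : 0 < mite_residual K.
Proof.
  unfold mite_residual, infected_share.
  replace (K / K) with 1 by (field; lra).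
  replace (r * (1 - 1) / (n + p * K)) with 0 by (field; nra).
  lra.
Qed.

Lemma mite_residual_continuous (S : R) :
  0 <= S <= K -> continuity_pt mite_residual S.
Proof.
  intros HS. assert (n + p * S <> 0) by nra.
  unfold mite_residual, infected_share. reg.
Qed.

Lemma mite_residual_root :
  exists S, 0 < S < K /\ mite_residual S = 0.
Proof.
  destruct (IVT_interv mite_residual 0 K mite_residual_continuous K_gt0
    mite_residual_0_lt0 mite_residual_K_gt0) as [S [HS HS0]].
  exists S; split; [|exact HS0].
  assert (S <> 0) by (intro; subst; pose proof mite_residual_0_lt0; lra).
  assert (S <> K) by (intro; subst; pose proof mite_residual_K_gt0; lra).
  lra.
Qed.

Lemma mite_equilibrium_exists :
  exists M N, 0 < M /\ 0 < N /\
    r * (1 - (M + N) / K) * (M + N) - i * M - delta * M * N = 0 /\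
    - n * N - p * N * (N + M) + i * M + delta * M * N = 0.
Proof.
  destruct mite_residual_root as [S [HS Hroot]].
  set (q := infected_share S).
  assert (Hdenom : 0 < n + p * S) by nra.
  assert (Hlogistic : 0 < 1 - S / K).
  { enough (S / K < 1) by lra.
    apply (Rmult_lt_reg_r K); [lra|]. unfold Rdiv.
    rewrite Rmult_assoc, Rinv_l; lra. }
  assert (Hq : q * (n + p * S) = r * (1 - S / K))
    by (unfold q, infected_share; field; lra).
  assert (Hq_gt0 : 0 < q) by nra.
  assert (Hbalance : (1 - q) * (i + delta * S * q) = r * (1 - S / K))
    by (unfold mite_residual in Hroot; fold q in Hroot; lra).
  exists (S - S * q), (S * q).
  assert (HN : 0 < S * q) by nra.
  assert (Hflux : (S - S * q) * (i + delta * (S * q)) = S * q * (n + p * S)).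
  { transitivity (S * ((1 - q) * (i + delta * S * q))); [ring|].
    rewrite Hbalance, <- Hq. ring. }
  assert (HM : 0 < S - S * q).
  { assert (0 < S * q * (n + p * S)) by nra.
    assert (0 < i + delta * (S * q)) by nra.
    nra. }
  replace (S - S * q + S * q) with S by ring.
  replace (S * q + (S - S * q)) with S by ring.
  repeat split; try assumption.
  - transitivity (S * (q * (n + p * S)) - (S - S * q) * (i + delta * (S * q)));
      [rewrite Hq; ring|].
    rewrite Hflux. ring.
  - transitivity ((S - S * q) * (i + delta * (S * q)) - S * q * (n + p * S));
      [ring|].
    rewrite Hflux. ring.
Qed.

End MiteSubsystem.

Lemma bee_equilibrium_healthy_free (b lam gam m mu M N : R) :
  0 < b -> 0 < m + mu ->
  fB b lam gam m mu 0 (b / (m + mu)) M N = 0 /\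
  fI b lam gam m mu 0 (b / (m + mu)) M N = 0.
Proof.
  intros Hb Hmmu. unfold fB, fI.
  assert (0 + b / (m + mu) <> 0)
    by (rewrite Rplus_0_l; apply Rgt_not_eq, Rdiv_lt_0_compat; lra).
  split; field; lra.
Qed.

Lemma invasion_condition (b m mu r n beta : R) :
  0 < b -> 0 < m + mu -> 0 < r -> 0 < n -> 0 < beta ->
  (r > beta * b / (m + mu) \/ beta * b * (r - n) + r * n * (m + mu) > 0) ->
  beta * (b / (m + mu)) * (r - n) + r * n > 0.
Proof.
  intros Hb Hmmu Hr Hn Hbeta [Hc | Hc].
  - assert (Hi : 0 < beta * (b / (m + mu)))
      by (apply Rmult_lt_0_compat; [|apply Rdiv_lt_0_compat]; lra).
    assert (Hir : beta * (b / (m + mu)) < r) by (unfold Rdiv in *; lra).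
    nra.
  - replace (beta * (b / (m + mu)) * (r - n) + r * n)
      with ((beta * b * (r - n) + r * n * (m + mu)) / (m + mu)) by (field; lra).
    apply Rdiv_lt_0_compat; lra.
Qed.

Theorem mainTheorem3 (b lam gam m mu r K beta delta e n p : R) :
  0 < b -> 0 < lam -> 0 < gam -> 0 < m -> 0 < mu -> 0 < r -> 0 < K ->
  0 < beta -> 0 < delta -> 0 < e -> 0 < n -> 0 < p ->
  (r > beta * b / (m + mu) \/ beta * b * (r - n) + r * n * (m + mu) > 0) ->
  exists M5 N5 : R, 0 < M5 /\ 0 < N5 /\
    is_equilibrium b lam gam m mu r K beta delta e n p
      0 (b / (m + mu)) M5 N5.
Proof.
  intros Hb _ _ Hm Hmu Hr HK Hbeta Hdelta _ Hn Hp Hcond.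
  assert (Hmmu : 0 < m + mu) by lra.
  set (I := b / (m + mu)).
  assert (Hi : 0 < beta * I)
    by (apply Rmult_lt_0_compat; [|apply Rdiv_lt_0_compat]; lra).
  destruct (mite_equilibrium_exists r K n p delta (beta * I) Hr HK Hn Hp Hdelta Hi
    (invasion_condition b m mu r n beta Hb Hmmu Hr Hn Hbeta Hcond))
    as [M [N [HM [HN [HfM HfN]]]]].
  destruct (bee_equilibrium_healthy_free b lam gam m mu M N Hb Hmmu) as [HfB HfI].
  exists M, N. repeat split; try assumption; unfold fM, fN.
  - etransitivity; [|exact HfM]. ring.
  - etransitivity; [|exact HfN]. ring.
Qed.
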